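(* The abelian category $\mathcal R$ of rational $\mathfrak{sl}(2)$-modules decomposes as the $\mathrm{Hom}$-orthogonal direct sum of the abelian subcategories of generalized rational Casimir modules: $$\mathcal R=\bigoplus_{\mu\in\mathbb{C}}\mathcal{RC}^\bullet_\mu .$$ That is, every rational module $W$ is a finite direct sum, as $\mathfrak{sl}(2)$-modules, $W=W_{\mu_1}\oplus\cdots\oplus W_{\mu_r}$ with pairwise distinct $\mu_i\in\mathbb{C}$ and $W_{\mu_i}\in\mathcal{RC}^\bullet_{\mu_i}$, and $\mathrm{Hom}_{\mathfrak{sl}(2)}(A,B)=0$ whenever $A\in\mathcal{RC}^\bullet_\mu$, $B\in\mathcal{RC}^\bullet_\nu$ with $\mu\neq\nu$. This decomposition is compatible with the coproduct decomposition $\mathcal{RC}=\coprod_{\mu\in\mathbb{C}}\mathcal{RC}_\mu$ (i.e. $\mathcal{RC}_\mu\subseteq\mathcal{RC}^\bullet_\mu$ for each $\mu$).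
   Context: $\mathfrak{sl}(2)$ has basis $L_{-1}=f$, $L_0=-\tfrac12 h$, $L_1=-e$ for a Chevalley basis $e,f,h$ ($[e,f]=h$, $[h,e]=2e$, $[h,f]=-2f$). Every $\mathfrak{sl}(2)$-module $(V,\rho)$ is a $\mathbb{C}[z]$-module via $z\cdot v=\rho(L_0)v$, and has Casimir operator $C_\rho=\rho(L_0)(\rho(L_0)-1)-\rho(L_{-1})\rho(L_1)$. A rational module is an $\mathfrak{sl}(2)$-module whose $\mathbb{C}[z]$-module structure is that of a finite-dimensional $\mathbb{C}(z)$-vector space; $\mathcal R$ is the full subcategory of $\mathfrak{sl}(2)$-modules formed by rational modules. A module is Casimir of level $\mu$ if $C_\rho=\mu\,\mathrm{Id}$, and generalized Casimir of level $\mu$ if $(C_\rho-\mu)^n=0$ for some $n\ge1$. $\mathcal{RC}_\mu$ (resp. $\mathcal{RC}^\bullet_\mu$) is the full subcategory of $\mathcal R$ of Casimir (resp. generalized Casimir) rational modules of level $\mu$, and $\mathcal{RC}$ is the full subcategory of all rational Casimir modules (of any level). *)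

From HB Require Import structures.
From mathcomp Require Import all_boot all_order all_algebra.
From mathcomp Require Import Rstruct.
From mathcomp.real_closed Require Import complex.
Set Implicit Arguments. Unset Strict Implicit. Unset Printing Implicit Defensive.
Import Order.TTheory GRing.Theory Num.Theory.
Local Open Scope ring_scope.

Local Open Scope complex_scope.
Definition CC_field : numClosedFieldType := Rdefinitions.R[i].
Local Close Scope complex_scope.

Record sl2mod := Sl2Mod {
  carrier :> lmodType CC_field;
  rhoE : {linear carrier -> carrier};
  rhoF : {linear carrier -> carrier};
  rhoH : {linear carrier -> carrier};
  _ : forall v, rhoE (rhoF v) - rhoF (rhoE v) = rhoH v;
  _ : forall v, rhoH (rhoE v) - rhoE (rhoH v) = 2%:R *: rhoE v;
  _ : forall v, rhoH (rhoF v) - rhoF (rhoH v) = - (2%:R *: rhoF v)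
}.

Section Defs.
Variable M : sl2mod.

Definition Lm1 (v : M) : M := rhoF M v.
Definition L0 (v : M) : M := (- (2%:R)^-1) *: rhoH M v.
Definition L1 (v : M) : M := - rhoE M v.

Definition casimir (v : M) : M := L0 (L0 v - v) - Lm1 (L1 v).

(* C[z]-module structure: z . v = rho(L0) v, so p . v = p(rho(L0)) v. *)
Definition polyact (p : {poly CC_field}) (v : M) : M :=
  \sum_(i < size p) p`_i *: iter i L0 v.

Definition submodule (S : M -> Prop) : Prop :=
  [/\ S 0,
      (forall u v, S u -> S v -> S (u + v)),
      (forall (a : CC_field) v, S v -> S (a *: v)) &
      (forall v, S v -> [/\ S (rhoE M v), S (rhoF M v) & S (rhoH M v)])].

(* The submodule S (with the restricted action) is rational: its C[z]-module
   structure is that of a C(z)-vector space (every nonzero polynomial acts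
   bijectively on S) which is finite dimensional (finitely spanned over C(z):
   every v in S satisfies p.v = sum_i q_i.b_i for some p <> 0). *)
Definition rational_on (S : M -> Prop) : Prop :=
  submodule S /\
  (forall p : {poly CC_field}, p != 0 ->
     (forall v, S v -> polyact p v = 0 -> v = 0) /\
     (forall w, S w -> exists v, S v /\ polyact p v = w)) /\
  (exists (n : nat) (b : 'I_n -> M), (forall i, S (b i)) /\
     forall v, S v -> exists (p : {poly CC_field}) (q : 'I_n -> {poly CC_field}),
       p != 0 /\ polyact p v = \sum_(i < n) polyact (q i) (b i)).

Definition casimir_on (mu : CC_field) (S : M -> Prop) : Prop :=
  forall v, S v -> casimir v = mu *: v.

Definition gen_casimir_on (mu : CC_field) (S : M -> Prop) : Prop :=
  exists n : nat, (0 < n)%N /\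
    forall v, S v -> iter n (fun w => casimir w - mu *: w) v = 0.

End Defs.

Definition whole (M : sl2mod) : M -> Prop := fun _ => True.
Definition rational (M : sl2mod) : Prop := @rational_on M (@whole M).
Definition in_RC (mu : CC_field) (M : sl2mod) : Prop :=
  rational M /\ @casimir_on M mu (@whole M).
Definition in_RCgen (mu : CC_field) (M : sl2mod) : Prop :=
  rational M /\ @gen_casimir_on M mu (@whole M).

Definition sl2hom (A B : sl2mod) (phi : {linear A -> B}) : Prop :=
  forall v, [/\ phi (rhoE A v) = rhoE B (phi v),
                phi (rhoF A v) = rhoF B (phi v) &
                phi (rhoH A v) = rhoH B (phi v)].

From HB Require Import structures.
From mathcomp Require Import all_boot all_order all_algebra.
From mathcomp Require Import Rstruct.
From mathcomp.real_closed Require Import complex.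
From mathcomp Require Import ring.
From Stdlib Require Import Classical.
Set Implicit Arguments. Unset Strict Implicit. Unset Printing Implicit Defensive.
Import Order.TTheory GRing.Theory Num.Theory.
Local Open Scope ring_scope.

Arguments L0 : simpl never.
Arguments casimir : simpl never.
Arguments polyact : simpl never.

(* The Casimir operator C commutes with L0, so it is an endomorphism of the
   finite-dimensional C(z)-vector space W, z acting as L0; Cayley-Hamilton gives a
   nonzero Psi(z, X) in C[z][X] with Psi(L0, C) = 0.  Since FE = C - z(z-1) and
   EF = C - z(z+1), and moving F (resp. E) across a polynomial in L0 shifts z by
   -1 (resp. +1), the ideal of such annihilators is stable under twisting by these
   shifts.  An element Phi of minimal X-degree then satisfies Phi(z-1, X) ~ Phi(z, X),
   which forces Phi = l(z) P(X) with P in C[X]; as nonzero polynomials in L0 act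
   injectively, P(C) = 0.  Hence W is the direct sum of the generalized eigenspaces
   of C for the roots of P.  They are submodules because C is central, and rational
   because the decomposition is unique and compatible with the action of C[z].
   Morphisms commute with C, which gives the Hom-orthogonality. *)

Lemma L0_linear (W : sl2mod) : linear (@L0 W).
Proof. by move=> a u v; rewrite /L0 linearP scalerDr !scalerA mulrC. Qed.
HB.instance Definition _ (W : sl2mod) :=
  GRing.isLinear.Build CC_field W W *:%R (@L0 W) (@L0_linear W).

Section Sl2Identities.
Variable W : sl2mod.
Local Notation E := (rhoE W).
Local Notation F := (rhoF W).
Local Notation H := (rhoH W).
Local Notation L0 := (@L0 W).

Lemma sl2_EF (v : W) : E (F v) - F (E v) = H v.
Proof. by case: W v => ? ? ? ? ? ? ? v. Qed.
Lemma sl2_HE (v : W) : H (E v) - E (H v) = 2%:R *: E v.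
Proof. by case: W v => ? ? ? ? ? ? ? v. Qed.
Lemma sl2_HF (v : W) : H (F v) - F (H v) = - (2%:R *: F v).
Proof. by case: W v => ? ? ? ? ? ? ? v. Qed.

Let two_neq0 : (2%:R : CC_field) != 0. Proof. by rewrite pnatr_eq0. Qed.

Lemma H_L0 (v : W) : H v = - (2%:R *: L0 v).
Proof. by rewrite /L0 scalerA mulrN mulfV // scaleN1r opprK. Qed.

Lemma L0_F (v : W) : L0 (F v) = F (L0 v) + F v.
Proof.
move/eqP: (sl2_HF v); rewrite subr_eq => /eqP h.
by rewrite /L0 h scalerDr scalerN scalerA mulNr mulVf // scaleN1r opprK linearZ addrC.
Qed.

Lemma L0_E (v : W) : L0 (E v) = E (L0 v) - E v.
Proof.
move/eqP: (sl2_HE v); rewrite subr_eq => /eqP h.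
by rewrite /L0 h scalerDr scalerA mulNr mulVf // scaleN1r linearZ addrC.
Qed.

Lemma EF_FE (v : W) : E (F v) = F (E v) - 2%:R *: L0 v.
Proof. by move/eqP: (sl2_EF v); rewrite subr_eq => /eqP ->; rewrite H_L0 addrC. Qed.

Lemma casimirE (v : W) : casimir v = L0 (L0 v) - L0 v + F (E v).
Proof. by rewrite /casimir /Lm1 /L1 linearB linearN opprK. Qed.

Lemma casimir_linear : linear (@casimir W).
Proof.
move=> a u v; rewrite !casimirE !(linearP L0) (linearP (rhoE W)) (linearP (rhoF W)).
by rewrite opprD [_ + (- _ - _)]addrACA -scalerBr [LHS]addrACA -scalerDr.
Qed.
End Sl2Identities.

HB.instance Definition _ (W : sl2mod) :=
  GRing.isLinear.Build CC_field W W *:%R (@casimir W) (@casimir_linear W).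

Section CasimirCentral.
Variable W : sl2mod.
Local Notation E := (rhoE W).
Local Notation F := (rhoF W).
Local Notation H := (rhoH W).
Local Notation L0 := (@L0 W).
Local Notation C := (@casimir W).

Lemma casimir_L0 (v : W) : C (L0 v) = L0 (C v).
Proof.
rewrite !casimirE !(linearD L0) (linearN L0); congr (_ + _).
have E_L0 : E (L0 v) = L0 (E v) + E v by rewrite L0_E subrK.
by rewrite E_L0 linearD /= L0_F.
Qed.

Lemma casimir_F (v : W) : C (F v) = F (C v).
Proof.
rewrite !casimirE EF_FE scaler_nat !linearD !linearN /= L0_F (linearD L0) /= !L0_F addrK.
by rewrite [F (F (E v)) + _]addrC -!addrA addNKr.
Qed.

Lemma casimir_E (v : W) : C (E v) = E (C v).
Proof.
have FE_EF : F (E (E v)) = E (F (E v)) + 2%:R *: L0 (E v) by rewrite EF_FE subrK.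
rewrite !casimirE FE_EF !linearD !linearN /= scaler_nat mulr2n.
rewrite [X in L0 X]L0_E (linearB L0) /= L0_E.
set w := L0 (E v).
by rewrite -addrA [- w + _]addrCA addKr addrCA subrK addrC.
Qed.

Lemma casimir_H (v : W) : C (H v) = H (C v).
Proof. by rewrite !H_L0 linearN linearZ /= casimir_L0. Qed.
End CasimirCentral.

Lemma morph_add0 (M N : zmodType) (f : M -> N) :
  (forall u v, f (u + v) = f u + f v) -> f 0 = 0.
Proof. by move=> fD; apply: (@addrI _ (f 0)); rewrite -fD !addr0. Qed.

Section PolyAction.
Variables (R : comNzRingType) (V : lmodType CC_field).
Variables (A : R -> V -> V) (T : V -> V).

(* A r is the action of the coefficient r and T that of X, so that peval p v = p(T) v;
   admissible says that this makes V an R[X]-module. *)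
Record admissible : Prop := Admissible {
  admDl : forall r s v, A (r + s) v = A r v + A s v;
  admDr : forall r u v, A r (u + v) = A r u + A r v;
  admZr : forall r (a : CC_field) v, A r (a *: v) = a *: A r v;
  adm1 : forall v, A 1 v = v;
  admM : forall r s v, A (r * s) v = A r (A s v);
  adm_comm : forall r v, A r (T v) = T (A r v);
  admTD : forall u v, T (u + v) = T u + T v;
  admTZ : forall (a : CC_field) v, T (a *: v) = a *: T v }.

Definition peval (p : {poly R}) (v : V) : V := \sum_(i < size p) A p`_i (iter i T v).

Hypothesis hA : admissible.

Lemma adm0l v : A 0 v = 0.
Proof. by apply: (@addrI _ (A 0 v)); rewrite -(admDl hA) !addr0. Qed.
Lemma adm0r r : A r 0 = 0.
Proof. exact: morph_add0 (admDr hA r). Qed.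
Lemma adm_sumr r (I : Type) (s : seq I) (P : pred I) (f : I -> V) :
  A r (\sum_(i <- s | P i) f i) = \sum_(i <- s | P i) A r (f i).
Proof. exact: (big_morph (A r) (admDr hA r) (adm0r r)). Qed.

Lemma iterT_D n u v : iter n T (u + v) = iter n T u + iter n T v.
Proof. by elim: n => //= n ->; rewrite (admTD hA). Qed.
Lemma iterT_Z n a v : iter n T (a *: v) = a *: iter n T v.
Proof. by elim: n => //= n ->; rewrite (admTZ hA). Qed.

Lemma peval_bound n (p : {poly R}) v : (size p <= n)%N ->
  peval p v = \sum_(i < n) A p`_i (iter i T v).
Proof.
move=> hn; rewrite /peval (big_ord_widen n (fun i => A p`_i (iter i T v))) //.
rewrite big_mkcond; apply: eq_bigr => i _; case: ifP => // h.
by rewrite nth_default ?adm0l // leqNgt h.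
Qed.

Lemma peval0 v : peval 0 v = 0.
Proof. by rewrite /peval size_poly0 big_ord0. Qed.

Lemma pevalD p q v : peval (p + q) v = peval p v + peval q v.
Proof.
set n := maxn (size p) (size q).
rewrite !(@peval_bound n) ?leq_maxl ?leq_maxr ?size_polyD //.
by rewrite -big_split; apply: eq_bigr => i _; rewrite coefD (admDl hA).
Qed.

Lemma pevalN p v : peval (- p) v = - peval p v.
Proof. by apply/eqP; rewrite -subr_eq0 opprK -pevalD addNr peval0. Qed.

Lemma pevalB p q v : peval (p - q) v = peval p v - peval q v.
Proof. by rewrite pevalD pevalN. Qed.

Lemma peval_sum (I : Type) (s : seq I) (P : pred I) (f : I -> {poly R}) v :
  peval (\sum_(i <- s | P i) f i) v = \sum_(i <- s | P i) peval (f i) v.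
Proof. exact: (big_morph (peval^~ v) (fun p q => pevalD p q v) (peval0 v)). Qed.

Lemma pevalC c v : peval c%:P v = A c v.
Proof. by rewrite (@peval_bound 1) ?size_polyC_leq1 // big_ord1 coefC. Qed.

Lemma peval1 v : peval 1 v = v.
Proof. by rewrite pevalC (adm1 hA). Qed.

Lemma pevalvD p u v : peval p (u + v) = peval p u + peval p v.
Proof.
by rewrite /peval -big_split; apply: eq_bigr => i _; rewrite iterT_D (admDr hA).
Qed.

Lemma pevalvZ p a v : peval p (a *: v) = a *: peval p v.
Proof.
by rewrite /peval scaler_sumr; apply: eq_bigr => i _; rewrite iterT_Z (admZr hA).
Qed.

Lemma pevalv0 p : peval p 0 = 0.
Proof. exact: morph_add0 (pevalvD p). Qed.

Lemma pevalvN p v : peval p (- v) = - peval p v.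
Proof. by rewrite -scaleN1r pevalvZ scaleN1r. Qed.

Lemma pevalvB p u v : peval p (u - v) = peval p u - peval p v.
Proof. by rewrite pevalvD pevalvN. Qed.

Lemma pevalv_sum p (I : Type) (s : seq I) (P : pred I) (f : I -> V) :
  peval p (\sum_(i <- s | P i) f i) = \sum_(i <- s | P i) peval p (f i).
Proof. exact: (big_morph (peval p) (pevalvD p) (pevalv0 p)). Qed.

Lemma peval_mulX p v : peval (p * 'X) v = peval p (T v).
Proof.
rewrite (@peval_bound (size p).+1); last first.
  by rewrite (leq_trans (size_polyMleq _ _)) // size_polyX addn2.
rewrite big_ord_recl coefMX eqxx adm0l add0r /peval; apply: eq_bigr => i _.
by rewrite coefMX /= add0n -iterS iterSr.
Qed.

Lemma peval_CM c p v : peval (c%:P * p) v = A c (peval p v).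
Proof.
rewrite (@peval_bound (size p)); last by rewrite mul_polyC size_scale_leq.
by rewrite /peval adm_sumr; apply: eq_bigr => i _; rewrite coefCM (admM hA).
Qed.

Lemma peval_map (S : V -> V) (f : R -> R) p v :
  f 0 = 0 -> (forall u w, S (u + w) = S u + S w) ->
  (forall r u, S (A r u) = A (f r) (S u)) -> (forall u, S (T u) = T (S u)) ->
  S (peval p v) = peval (map_poly f p) (S v).
Proof.
move=> f0 SD SA ST; rewrite (@peval_bound (size p) (map_poly f p)) ?size_poly //.
rewrite /peval (big_morph S SD (morph_add0 SD)); apply: eq_bigr => i _.
rewrite SA coef_map_id0 //; congr (A _ _).
by elim: (nat_of_ord i) => //= n IH; rewrite ST IH.
Qed.

Lemma peval_comm (S : V -> V) p v :
  (forall u w, S (u + w) = S u + S w) ->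
  (forall r u, S (A r u) = A r (S u)) -> (forall u, S (T u) = T (S u)) ->
  S (peval p v) = peval p (S v).
Proof. by move=> SD SA ST; rewrite (@peval_map S id) // map_poly_id. Qed.

Lemma peval_T p v : peval p (T v) = T (peval p v).
Proof.
rewrite (@peval_comm T) //; first exact: admTD hA.
by move=> r u; rewrite (adm_comm hA).
Qed.

Lemma pevalM p q v : peval (p * q) v = peval p (peval q v).
Proof.
elim/poly_ind: p v => [|p c IH] v; first by rewrite mul0r !peval0.
rewrite mulrDl -mulrA (mulrC 'X) mulrA pevalD peval_mulX IH peval_CM.
by rewrite pevalD peval_mulX pevalC peval_T.
Qed.

Lemma pevalX v : peval 'X v = T v.
Proof. by rewrite -(mul1r 'X) peval_mulX peval1. Qed.

Lemma peval_comp (S : V -> V) q p v :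
  (forall u w, S (u + w) = S u + S w) ->
  (forall r u, S (A r u) = A r (S u)) -> (forall u, S (T u) = peval q (S u)) ->
  S (peval p v) = peval (p \Po q) (S v).
Proof.
move=> SD SA ST.
elim/poly_ind: p v => [|p c IH] v; first by rewrite comp_poly0 !peval0 morph_add0.
by rewrite comp_poly_MXaddC !pevalD peval_mulX SD IH ST pevalM !pevalC SA.
Qed.

End PolyAction.

Lemma scale_admissible (V : lmodType CC_field) (T : {linear V -> V}) :
  admissible *:%R T.
Proof.
split=> *; rewrite ?scalerDl ?scalerDr ?scale1r ?scalerA ?linearD ?linearZ //.
by rewrite mulrC.
Qed.

Lemma polyact_linear (W : sl2mod) p : linear (@polyact W p).
Proof.
move=> a u v; have adm := scale_admissible (@L0 W).
change (peval *:%R (@L0 W) p (a *: u + v) =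
        a *: peval *:%R (@L0 W) p u + peval *:%R (@L0 W) p v).
by rewrite (pevalvD adm) (pevalvZ adm).
Qed.
HB.instance Definition _ (W : sl2mod) p :=
  GRing.isLinear.Build CC_field W W *:%R (@polyact W p) (@polyact_linear W p).

Notation shift z := (comp_poly ('X + z%:P)).

Definition poly_FE : {poly CC_field} := 'X * ('X - 1).
Definition poly_EF : {poly CC_field} := 'X * ('X + 1).

Section Sl2PolyAction.
Variable W : sl2mod.
Local Notation E := (rhoE W).
Local Notation F := (rhoF W).
Local Notation L0 := (@L0 W).
Local Notation C := (@casimir W).
Local Notation pa := (@polyact W).
Local Notation admL0 := (scale_admissible L0).

Lemma polyactE p v : pa p v = peval *:%R L0 p v.
Proof. by []. Qed.

Lemma casimir_polyact p v : C (pa p v) = pa p (C v).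
Proof.
rewrite (peval_comm admL0) //.
- exact: linearD.
- by move=> r u; rewrite linearZ.
- exact: casimir_L0.
Qed.

Lemma polyact_admissible : admissible pa C.
Proof.
split.
- exact: pevalD admL0.
- exact: pevalvD admL0.
- exact: pevalvZ admL0.
- exact: peval1 admL0.
- exact: pevalM admL0.
- by move=> r v; rewrite casimir_polyact.
- exact: linearD.
- by move=> a v; rewrite linearZ.
Qed.

Lemma polyact_XaddC (c : CC_field) v : pa ('X + c%:P) v = L0 v + c *: v.
Proof. by rewrite polyactE (pevalD admL0) (pevalX admL0) (pevalC admL0). Qed.

Lemma F_polyact p v : F (pa p v) = pa (shift (-1) p) (F v).
Proof.
rewrite (peval_comp admL0 (q := 'X + (-1)%:P)) //.
- exact: linearD.
- by move=> r u; rewrite linearZ.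
- by move=> u; rewrite -polyactE polyact_XaddC scaleN1r L0_F addrK.
Qed.

Lemma E_polyact p v : E (pa p v) = pa (shift 1 p) (E v).
Proof.
rewrite (peval_comp admL0 (q := 'X + 1%:P)) //.
- exact: linearD.
- by move=> r u; rewrite linearZ.
- by move=> u; rewrite -polyactE polyact_XaddC scale1r L0_E subrK.
Qed.

Local Notation act2 := (peval pa C).

Lemma F_act2 P v : F (act2 P v) = act2 (map_poly (shift (-1)) P) (F v).
Proof.
rewrite (@peval_map _ _ _ _ polyact_admissible F (shift (-1))) ?comp_poly0 //.
- exact: linearD.
- by move=> r u; rewrite F_polyact.
- by move=> u; rewrite casimir_F.
Qed.

Lemma E_act2 P v : E (act2 P v) = act2 (map_poly (shift 1) P) (E v).
Proof.
rewrite (@peval_map _ _ _ _ polyact_admissible E (shift 1)) ?comp_poly0 //.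
- exact: linearD.
- by move=> r u; rewrite E_polyact.
- by move=> u; rewrite casimir_E.
Qed.

Lemma act2_FE v : act2 ('X - poly_FE%:P) v = F (E v).
Proof.
rewrite (pevalB polyact_admissible) (pevalX polyact_admissible).
rewrite (pevalC polyact_admissible) /poly_FE polyactE (pevalM admL0).
rewrite (pevalX admL0) (pevalB admL0) (pevalX admL0) (pevalC admL0) scale1r.
by rewrite /casimir /Lm1 /L1 addrAC subrr add0r linearN opprK.
Qed.

Lemma act2_EF v : act2 ('X - poly_EF%:P) v = E (F v).
Proof.
rewrite (pevalB polyact_admissible) (pevalX polyact_admissible).
rewrite (pevalC polyact_admissible) /poly_EF polyactE (pevalM admL0).
rewrite (pevalX admL0) (pevalD admL0) (pevalX admL0) (pevalC admL0) scale1r.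
rewrite casimirE EF_FE scaler_nat mulr2n linearD.
by rewrite !opprD addrACA [L0 (L0 v) - _ - _]addrAC subrr add0r addrCA.
Qed.
End Sl2PolyAction.

Lemma shift_inj (z : CC_field) : injective (shift z).
Proof. by move=> p q /(congr1 (comp_poly ('X - z%:P))); rewrite !comp_polyXaddC_K. Qed.

Lemma shiftNK (p : {poly CC_field}) : shift (-1) (shift 1 p) = p.
Proof. by rewrite polyCN -[in RHS](comp_polyXaddC_K p 1). Qed.

Lemma horner_shift z (p : {poly CC_field}) x : (shift z p).[x] = p.[x + z].
Proof. by rewrite horner_comp hornerD hornerX hornerC. Qed.

Lemma shift_poly_EF : shift (-1) poly_EF = poly_FE.
Proof.
rewrite /poly_FE /poly_EF comp_polyM comp_polyD !comp_polyX comp_polyC polyCN.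
by rewrite -addrA addNr addr0 mulrC.
Qed.

Lemma map_shiftK (P : {poly {poly CC_field}}) :
  map_poly (shift (-1)) (map_poly (shift 1) P) = P.
Proof. by rewrite -map_poly_comp map_poly_id // => x _ /=; rewrite shiftNK. Qed.

Lemma size_map_shift z (P : {poly {poly CC_field}}) :
  size (map_poly (shift z) P) = size P.
Proof. by rewrite size_map_inj_poly ?comp_poly0 //; exact: shift_inj. Qed.

Lemma map_shift_MXaddC z (c d : {poly CC_field}) (P : {poly {poly CC_field}}) :
  map_poly (shift z) ((c%:P * 'X + d%:P) * P) =
  ((shift z c)%:P * 'X + (shift z d)%:P) * map_poly (shift z) P.
Proof. by rewrite rmorphM rmorphD rmorphM /= !map_polyC map_polyX. Qed.

Lemma map_shift_CMXsubC z (c d : {poly CC_field}) (P : {poly {poly CC_field}}) :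
  map_poly (shift z) (c%:P * (('X - d%:P) * P)) =
  (shift z c)%:P * (('X - (shift z d)%:P) * map_poly (shift z) P).
Proof. by rewrite !rmorphM /= map_polyXsubC map_polyC. Qed.

Lemma classical_ex_min (P : nat -> Prop) : (exists n, P n) ->
  exists n, P n /\ forall k, (k < n)%N -> ~ P k.
Proof.
move=> [n Pn]; elim/ltn_ind: n Pn => n IH Pn.
case: (classic (exists k, (k < n)%N /\ P k)) => [[k [lt_kn Pk]]|none].
  exact: IH lt_kn Pk.
by exists n; split=> // k lt_kn Pk; apply: none; exists k.
Qed.

Lemma root_free_progression (q : {poly CC_field}) : q != 0 ->
  exists t, forall k : nat, q.[t + k%:R] != 0.
Proof.
move=> q_neq0; apply: NNPP => no_t.
(* Otherwise each of the size q disjoint progressions 'i j + N contains a root of q. *)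
have hit j : exists k : nat, q.['i * j%:R + k%:R] = 0.
  apply: NNPP => no_k; apply: no_t; exists ('i * j%:R) => k.
  by apply/eqP => qk; apply: no_k; exists k.
have [kf hkf] := fin_all_exists (fun j : 'I_(size q) => hit j).
pose rs := [seq ('i : CC_field) * (val j)%:R + (kf j)%:R | j <- enum 'I_(size q)].
suff : (size rs < size q)%N by rewrite size_map size_enum_ord ltnn.
apply: max_poly_roots => //.
  by apply/allP => x /mapP [j _ ->]; apply/rootP; exact: hkf.
rewrite map_inj_uniq ?enum_uniq // => j1 j2 /(congr1 (fun x => 'Im x)).
rewrite ![_ + (kf _)%:R]addrC !Im_rect ?realn // => /eqP.
by rewrite eqr_nat => /eqP /val_inj.
Qed.

Lemma shift_ratio_const (q : {poly CC_field}) : q != 0 -> exists t, q.[t] != 0 /\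
  forall p, q * shift (-1) p = shift (-1) q * p -> p = (p.[t] / q.[t]) *: q.
Proof.
move=> q_neq0; have [t qt_neq0] := root_free_progression q_neq0.
have qt : q.[t] != 0 by move: (qt_neq0 0%N); rewrite addr0.
exists t; split=> // p hp.
set h := p - (p.[t] / q.[t]) *: q.
have hh : q * shift (-1) h = shift (-1) q * h.
  rewrite /h comp_polyB comp_polyZ; apply/eqP; rewrite -subr_eq0; apply/eqP.
  transitivity (q * shift (-1) p - shift (-1) q * p); last by rewrite hp subrr.
  by rewrite -!mul_polyC; ring.
have hk (k : nat) : h.[t + k%:R] = 0.
  elim: k => [|k IH]; first by rewrite addr0 /h hornerD hornerN hornerZ mulfVK // subrr.
  have := congr1 (horner^~ (t + k.+1%:R)) hh.
  rewrite !hornerM !horner_shift -natr1 addrA addrK IH mulr0 => /esym/eqP.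
  by rewrite mulf_eq0 (negbTE (qt_neq0 k)) => /eqP.
suff h0 : h = 0 by apply/eqP; rewrite -subr_eq0 -/h h0.
apply/eqP; apply: contraT => h_neq0.
have : (size [seq (t + k%:R)%R | k <- iota 0 (size h)] < size h)%N.
  apply: max_poly_roots => //.
    by apply/allP => x /mapP [k _ ->]; apply/rootP; exact: hk.
  rewrite map_inj_uniq ?iota_uniq // => k1 k2 /addrI /eqP.
  by rewrite eqr_nat => /eqP.
by rewrite size_map size_iota ltnn.
Qed.

Lemma mulXsubC_cancel (R : idomainType) (a c d e : R) (P Q : {poly R}) :
  c%:P * (('X - a%:P) * P) = (d%:P * 'X + e%:P) * Q -> d * a + e = 0 ->
  c%:P * P = d%:P * Q.
Proof.
move=> PQ /eqP; rewrite addrC addr_eq0 => /eqP e_def.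
have : ('X - a%:P) * (c%:P * P - d%:P * Q) = 0.
  by rewrite mulrBr mulrCA PQ e_def polyCN polyCM; ring.
by move/eqP; rewrite mulf_eq0 polyXsubC_eq0 subr_eq0 => /eqP.
Qed.

Lemma size_poly_leS (R : nzRingType) (p : {poly R}) n :
  (size p <= n.+1)%N -> p`_n = 0 -> (size p <= n)%N.
Proof.
move=> /leq_sizeP p_small pn0; apply/leq_sizeP => j.
by rewrite leq_eqVlt => /predU1P [<- // | ]; exact: p_small.
Qed.

Lemma size_poly_gt_coef (R : nzRingType) (p : {poly R}) n : p`_n != 0 -> (n < size p)%N.
Proof. by apply: contraR; rewrite -leqNgt => /leq_sizeP ->. Qed.

Section TwistStableIdeal.
Local Notation R := {poly CC_field}.
Variable I : {poly R} -> Prop.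
Hypothesis idealD : forall P Q, I P -> I Q -> I (P + Q).
Hypothesis idealM : forall P Q, I Q -> I (P * Q).
Hypothesis ideal_saturated : forall (c : R) P, c != 0 -> I (c%:P * P) -> I P.
Hypothesis ideal_twistF :
  forall P, I P -> I (('X - poly_FE%:P) * map_poly (shift (-1)) P).
Hypothesis ideal_twistE :
  forall P, I P -> I (('X - poly_EF%:P) * map_poly (shift 1) P).

Let idealB P Q : I P -> I Q -> I (P - Q).
Proof. by move=> IP IQ; apply: idealD => //; rewrite -mulN1r; apply: idealM. Qed.

(* Minimizing also the degree of the leading coefficient lets us reduce modulo Phi
   inside C[z][X], as if dividing over C(z). *)
Section MinimalElement.
Variables (Phi : {poly R}) (m : nat).
Hypotheses (IPhi : I Phi) (size_Phi : size Phi = m.+1).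
Hypothesis Phi_min_size : forall Psi, I Psi -> (size Psi <= m)%N -> Psi = 0.
Hypothesis Phi_min_lead : forall Psi, I Psi -> size Psi = m.+1 ->
  (size (lead_coef Phi) <= size (lead_coef Psi))%N.

Local Notation l := (lead_coef Phi).

Let lead_Phi : l = Phi`_m. Proof. by rewrite lead_coefE size_Phi. Qed.
Let Phi_neq0 : Phi != 0. Proof. by rewrite -size_poly_gt0 size_Phi. Qed.
Let l_neq0 : l != 0. Proof. by rewrite lead_coef_eq0. Qed.

Lemma ideal_small_multiple Psi : I Psi -> (size Psi <= m.+1)%N ->
  exists s, Psi = s%:P * Phi.
Proof.
move=> IPsi Psi_small; case: (ltnP (size Psi) m.+1) => [lt_Psi|ge_Psi].
  by exists 0; rewrite mul0r; apply: Phi_min_size.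
have size_Psi : size Psi = m.+1 by apply/eqP; rewrite eqn_leq Psi_small ge_Psi.
set s := lead_coef Psi %/ l; exists s.
set Psi' := Psi - s%:P * Phi.
have IPsi' : I Psi' by apply: idealB => //; apply: idealM.
have Psi'_small : (size Psi' <= m.+1)%N.
  rewrite (leq_trans (size_polyD _ _)) // geq_max Psi_small size_polyN mul_polyC.
  by rewrite (leq_trans (size_scale_leq _ _)) ?size_Phi.
have Psi'_m : Psi'`_m = lead_coef Psi %% l.
  rewrite /Psi' coefB coefCM -lead_Phi [Psi`_m](_ : _ = lead_coef Psi).
    by rewrite {1}(divp_eq (lead_coef Psi) l) -/s addrAC subrr add0r.
  by rewrite lead_coefE size_Psi.
have [r0|r_neq0] := eqVneq (lead_coef Psi %% l) 0.
  have : Psi' = 0 by apply: Phi_min_size => //; rewrite size_poly_leS // Psi'_m.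
  by move/eqP; rewrite subr_eq0 => /eqP.
have size_Psi' : size Psi' = m.+1.
  by apply/eqP; rewrite eqn_leq Psi'_small size_poly_gt_coef // Psi'_m.
have := Phi_min_lead IPsi' size_Psi'.
by rewrite (lead_coefE Psi') size_Psi' /= Psi'_m leqNgt ltn_modp l_neq0.
Qed.

Lemma twist_relation (z : CC_field) (c : R) :
  I (('X - c%:P) * map_poly (shift z) Phi) ->
  exists t, l%:P * (('X - c%:P) * map_poly (shift z) Phi) =
            ((shift z l)%:P * 'X + t%:P) * Phi.
Proof.
move=> Itw; set G := l%:P * (('X - c%:P) * map_poly (shift z) Phi) -
                     (shift z l)%:P * ('X * Phi).
have IG : I G by apply: idealB; apply: idealM => //; apply: idealM.
have G_small : (size G <= m.+1)%N.
  apply: size_poly_leS.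
    rewrite (leq_trans (size_polyD _ _)) // geq_max size_polyN !mul_polyC.
    by rewrite !(leq_trans (size_scale_leq _ _)) // (leq_trans (size_polyMleq _ _)) //
      ?size_XsubC ?size_polyX ?size_map_shift ?size_Phi.
  rewrite coefB !coefCM mulrBl coefB coefXM coefCM !coef_map /= coefXM /=.
  rewrite -lead_Phi [Phi`_m.+1]nth_default ?size_Phi // comp_poly0 mulr0 subr0.
  by rewrite mulrC subrr.
have [t Gt] := ideal_small_multiple IG G_small; exists t.
apply/eqP; rewrite -subr_eq0; apply/eqP.
transitivity (G - t%:P * Phi); last by rewrite Gt subrr.
by rewrite /G; ring.
Qed.

Lemma twist_invariant : l%:P * map_poly (shift (-1)) Phi = (shift (-1) l)%:P * Phi.
Proof.
set Phi' := map_poly (shift (-1)) Phi; set a := poly_FE.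
have [t R1] := twist_relation (ideal_twistF IPhi).
have [s R2] := twist_relation (ideal_twistE IPhi).
have := congr1 (map_poly (shift (-1))) R2.
rewrite map_shift_CMXsubC map_shift_MXaddC shiftNK shift_poly_EF map_shiftK => R2'.
have Phi'_neq0 : Phi' != 0 by rewrite -size_poly_gt0 size_map_shift size_Phi.
(* Multiplying R1 and R2' shows that (X - a)^2 divides the product of the two
   linear polynomials in their right-hand sides, so one of them vanishes at a. *)
have : ((l * shift (-1) l)%:P * ('X - a%:P) ^+ 2 -
        ((shift (-1) l)%:P * 'X + t%:P) * (l%:P * 'X + (shift (-1) s)%:P)) *
       (Phi * Phi') = 0.
  transitivity (l%:P * (('X - a%:P) * Phi') * ((shift (-1) l)%:P * (('X - a%:P) * Phi))
    - ((shift (-1) l)%:P * 'X + t%:P) * Phi * ((l%:P * 'X + (shift (-1) s)%:P) * Phi')).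
    by rewrite polyCM; ring.
  by rewrite R1 R2' subrr.
move/eqP; rewrite !mulf_eq0 (negbTE Phi_neq0) (negbTE Phi'_neq0) !orbF subr_eq0.
move=> /eqP/(congr1 (horner^~ a))/eqP.
rewrite hornerM hornerC horner_exp hornerXsubC subrr exprS mul0r mulr0.
rewrite hornerM !hornerD !hornerMX !hornerC eq_sym mulf_eq0 => /orP [] /eqP root_a.
  exact: mulXsubC_cancel R1 root_a.
exact/esym/(mulXsubC_cancel R2' root_a).
Qed.

Lemma minimal_constant : exists P : {poly CC_field}, P != 0 /\ I P^:P.
Proof.
have [t [_ ratio]] := shift_ratio_const l_neq0.
pose P := \poly_(i < m.+1) ((Phi`_i).[t] / l.[t]).
have Phi_eq : Phi = l%:P * P^:P.
  apply/polyP => k; rewrite coefCM coef_map /= coef_poly; case: ltnP => hk.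
    rewrite {1}(ratio (Phi`_k)); first by rewrite -mul_polyC mulrC.
    by have := congr1 (coefp k) twist_invariant; rewrite /= !coefCM coef_map.
  by rewrite nth_default ?size_Phi // mulr0.
exists P; split; last by apply: (ideal_saturated l_neq0); rewrite -Phi_eq.
by apply/eqP => P0; move: Phi_neq0; rewrite Phi_eq P0 rmorph0 mulr0 eqxx.
Qed.
End MinimalElement.

Lemma twist_stable_ideal_constant :
  (exists P, P != 0 /\ I P) -> exists P : {poly CC_field}, P != 0 /\ I P^:P.
Proof.
move=> [P0 [P0_neq0 IP0]].
have [n [[Psi0 [Psi0_neq0 [IPsi0 size_Psi0]]] min_n]] := classical_ex_min
  (ex_intro (fun n => exists Psi, Psi != 0 /\ I Psi /\ size Psi = n) _
    (ex_intro _ P0 (conj P0_neq0 (conj IP0 erefl)))).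
have [d [[Phi [IPhi [size_Phi lead_Phi]]] min_d]] := classical_ex_min
  (ex_intro (fun d => exists Psi, I Psi /\ size Psi = n /\ size (lead_coef Psi) = d) _
    (ex_intro _ Psi0 (conj IPsi0 (conj size_Psi0 erefl)))).
case: n size_Psi0 min_n size_Phi min_d => [/eqP|m _ min_n size_Phi min_d].
  by rewrite size_poly_eq0 (negbTE Psi0_neq0).
apply: (@minimal_constant Phi m IPhi size_Phi).
  move=> Psi IPsi Psi_small; apply/eqP; apply: contraT => Psi_neq0; exfalso.
  by apply: (min_n _ Psi_small); exists Psi.
move=> Psi IPsi size_Psi; rewrite lead_Phi leqNgt; apply/negP => lt_Psi.
by apply: (min_d _ lt_Psi); exists Psi.
Qed.
End TwistStableIdeal.

Section CayleyHamilton.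
Variables (R : comNzRingType) (V : lmodType CC_field).
Variables (A : R -> V -> V) (T : V -> V).
Hypothesis hA : admissible A T.

Lemma char_poly_annihilates n (b : 'I_n -> V) (Q : 'M[R]_n) :
  (forall j, T (b j) = \sum_k A (Q j k) (b k)) ->
  forall k, peval A T (char_poly Q) (b k) = 0.
Proof.
move=> Tb k; pose N := char_poly_mx Q.
have Nb j : \sum_l peval A T (N j l) (b l) = 0.
  under eq_bigr => l _ do rewrite !mxE (pevalB hA) (pevalC hA).
  rewrite sumrB (bigD1 j) //= big1 => [|l /negbTE l_neq_j]; last first.
    by rewrite eq_sym l_neq_j mulr0n peval0.
  by rewrite eqxx mulr1n (pevalX hA) addr0 Tb subrr.
(* Cramer's rule: \adj N *m N = (\det N)%:M, and \det N = char_poly Q. *)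
have -> : peval A T (char_poly Q) (b k) =
          \sum_l peval A T (((\det N)%:M : 'M_n) k l) (b l).
  rewrite (bigD1 k) //= big1 => [|l /negbTE l_neq_k]; last first.
    by rewrite mxE eq_sym l_neq_k mulr0n peval0.
  by rewrite mxE eqxx mulr1n addr0.
rewrite -mul_adj_mx.
under eq_bigr => l _ do rewrite !mxE (peval_sum hA).
rewrite exchange_big /= big1 // => j _.
under eq_bigr => l _ do rewrite (pevalM hA).
by rewrite -(pevalv_sum hA) Nb (pevalv0 hA).
Qed.
End CayleyHamilton.

Section CasimirAnnihilator.
Variable W : sl2mod.
Hypothesis Wrat : rational W.
Local Notation E := (rhoE W).
Local Notation F := (rhoF W).
Local Notation C := (@casimir W).
Local Notation pa := (@polyact W).
Local Notation admL0 := (scale_admissible (@L0 W)).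
Local Notation admC := (@polyact_admissible W).
Local Notation act2 := (peval pa C).

Lemma rational_polyact_inj p v : p != 0 -> pa p v = 0 -> v = 0.
Proof. by move=> p_neq0; case: Wrat => _ [/(_ p p_neq0) [inj _] _]; exact: inj. Qed.

Lemma polyact_comm p q v : pa p (pa q v) = pa q (pa p v).
Proof. by rewrite !polyactE -!(pevalM admL0) mulrC. Qed.

Lemma polyact_act2 p P v : pa p (act2 P v) = act2 P (pa p v).
Proof.
rewrite (peval_comm admC (S := pa p)) //.
- exact: linearD.
- by move=> r u; rewrite polyact_comm.
- by move=> u; rewrite casimir_polyact.
Qed.

Definition annihilates (P : {poly {poly CC_field}}) := forall v : W, act2 P v = 0.

Lemma annihilatesD P Q : annihilates P -> annihilates Q -> annihilates (P + Q).
Proof. by move=> hP hQ v; rewrite (pevalD admC) hP hQ addr0. Qed.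

Lemma annihilatesM P Q : annihilates Q -> annihilates (P * Q).
Proof. by move=> hQ v; rewrite (pevalM admC) hQ (pevalv0 admC). Qed.

Lemma annihilates_saturated c P : c != 0 -> annihilates (c%:P * P) -> annihilates P.
Proof.
by move=> c_neq0 hP v; apply: (rational_polyact_inj c_neq0); rewrite -(peval_CM admC).
Qed.

Lemma annihilates_twistF P :
  annihilates P -> annihilates (('X - poly_FE%:P) * map_poly (shift (-1)) P).
Proof. by move=> hP v; rewrite mulrC (pevalM admC) act2_FE -F_act2 hP linear0. Qed.

Lemma annihilates_twistE P :
  annihilates P -> annihilates (('X - poly_EF%:P) * map_poly (shift 1) P).
Proof. by move=> hP v; rewrite mulrC (pevalM admC) act2_EF -E_act2 hP linear0. Qed.

Section ClearedCasimir.
Variable D : {poly CC_field}.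
Definition cleared_casimir (v : W) := pa D (C v).
Local Notation CD := cleared_casimir.

Lemma cleared_casimir_admissible : admissible pa CD.
Proof.
split; try by case: admC.
- by move=> r v; rewrite /CD casimir_polyact polyact_comm.
- by move=> u v; rewrite /CD (linearD C) (linearD (pa D)).
- by move=> a v; rewrite /CD !linearZ.
Qed.

Lemma peval_cleared_casimir p v :
  peval pa CD p v = act2 (\poly_(i < size p) (p`_i * D ^+ i)) v.
Proof.
have iterCD i u : iter i CD u = pa (D ^+ i) (iter i C u).
  elim: i => [|i IH] /=; first by rewrite expr0 polyactE (peval1 admL0).
  by rewrite IH /CD casimir_polyact !polyactE -(pevalM admL0) exprS.
rewrite (peval_bound admC (n := size p)) ?size_poly //.
rewrite /peval; apply: eq_bigr => i _.
by rewrite coef_poly ltn_ord iterCD [RHS]polyactE (pevalM admL0).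
Qed.
End ClearedCasimir.

Lemma exists_annihilator : exists P, P != 0 /\ annihilates P.
Proof.
case: Wrat => _ [_ [n [b [_ b_span]]]].
have Cb_span j : exists pq : {poly CC_field} * ('I_n -> {poly CC_field}),
    pq.1 != 0 /\ pa pq.1 (C (b j)) = \sum_k pa (pq.2 k) (b k).
  by have [p [q [p_neq0 e]]] := b_span (C (b j)) I; exists (p, q).
have [pq hpq] := fin_all_exists Cb_span.
(* Clearing the denominators of C in the spanning family b by D makes
   v |-> D(L0) C v act on the C[z]-span of b through a matrix Q. *)
pose D := \prod_j (pq j).1.
have D_neq0 : D != 0 by apply/prodf_neq0 => j _; case: (hpq j).
pose Q : 'M[{poly CC_field}]_n :=
  \matrix_(j, k) ((\prod_(i < n | i != j) (pq i).1) * (pq j).2 k).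
have CDb j : cleared_casimir D (b j) = \sum_k pa (Q j k) (b k).
  rewrite /cleared_casimir /D (bigD1 j) //= mulrC polyactE (pevalM admL0) -!polyactE.
  rewrite (proj2 (hpq j)) linear_sum; apply: eq_bigr => k _.
  by rewrite mxE [RHS]polyactE (pevalM admL0).
have char_b := char_poly_annihilates (cleared_casimir_admissible D) CDb.
exists (\poly_(i < size (char_poly Q)) ((char_poly Q)`_i * D ^+ i)); split.
  apply/eqP => /(congr1 (coefp n)) /=.
  rewrite coef_poly size_char_poly ltnSn coef0.
  move: (char_poly_monic Q); rewrite monicE lead_coefE size_char_poly => /eqP ->.
  by rewrite mul1r => /eqP; rewrite expf_eq0 (negbTE D_neq0) andbF.
move=> v; have [p [q [p_neq0 pv]]] := b_span v I.
apply: (rational_polyact_inj p_neq0); rewrite polyact_act2 pv (pevalv_sum admC).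
rewrite big1 // => k _.
by rewrite -polyact_act2 -peval_cleared_casimir char_b linear0.
Qed.

Lemma casimir_annihilated :
  exists P : {poly CC_field}, P != 0 /\ forall v, peval *:%R C P v = 0.
Proof.
have [P [P_neq0 hP]] := twist_stable_ideal_constant annihilatesD annihilatesM
  annihilates_saturated annihilates_twistF annihilates_twistE exists_annihilator.
exists P; split=> // v; move: (hP v).
rewrite (peval_bound admC (n := size P)) ?size_map_polyC //.
by under eq_bigr => i _ do rewrite coef_map /= polyactE (pevalC admL0).
Qed.
End CasimirAnnihilator.

Section PrimaryDecomposition.
Variables (V : lmodType CC_field) (T : {linear V -> V}).
Local Notation pT := (peval *:%R T).
Local Notation admT := (scale_admissible T).

Lemma peval_XsubC_exp c k v : pT (('X - c%:P) ^+ k) v = iter k (fun w => T w - c *: w) v.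
Proof.
elim: k v => [|k IH] v; first by rewrite expr0 (peval1 admT).
by rewrite exprS (pevalM admT) IH /= (pevalB admT) (pevalX admT) (pevalC admT).
Qed.

Lemma coprimep_peval_split (A B : {poly CC_field}) v :
  coprimep A B -> pT (A * B) v = 0 ->
  exists v1 v2, v = v1 + v2 /\ pT A v1 = 0 /\ pT B v2 = 0.
Proof.
move=> /Bezout_eq1_coprimepP [[u1 u2] /= Bezout] ABv.
exists (pT (u2 * B) v), (pT (u1 * A) v); split; last split.
- by rewrite -(pevalD admT) addrC Bezout (peval1 admT).
- by rewrite -(pevalM admT) mulrCA (pevalM admT) ABv (pevalv0 admT).
- by rewrite -(pevalM admT) mulrCA [B * A]mulrC (pevalM admT) ABv (pevalv0 admT).
Qed.

Lemma coprimep_peval_eq0 (A B : {poly CC_field}) v :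
  coprimep A B -> pT A v = 0 -> pT B v = 0 -> v = 0.
Proof.
move=> /Bezout_eq1_coprimepP [[u1 u2] /= Bezout] Av Bv.
rewrite -(peval1 admT v) -Bezout (pevalD admT) !(pevalM admT) Av Bv.
by rewrite !(pevalv0 admT) addr0.
Qed.

Variable mult : CC_field -> nat.
Definition primary_factor z : {poly CC_field} := ('X - z%:P) ^+ mult z.
Definition primary_product s : {poly CC_field} := \prod_(z <- s) primary_factor z.
Local Notation component z v := (pT (primary_factor z) v = 0).

Lemma coprimep_primary z s :
  z \notin s -> coprimep (primary_factor z) (primary_product s).
Proof.
move=> z_notin_s; apply: coprimep_expl; rewrite coprimep_sym coprimep_XsubC.
rewrite /root /primary_product horner_prod prodf_seq_neq0; apply/allP => y y_in_s /=.
rewrite /primary_factor horner_exp hornerXsubC expf_neq0 // subr_eq0.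
by apply: contraNneq z_notin_s => ->.
Qed.

Lemma peval_primary_product z s v :
  z \in s -> component z v -> pT (primary_product s) v = 0.
Proof.
move=> z_in_s zv.
by rewrite /primary_product (big_rem z z_in_s) /= mulrC (pevalM admT) zv (pevalv0 admT).
Qed.

Lemma primary_decomposition s : uniq s -> forall v, pT (primary_product s) v = 0 ->
  exists ws : 'I_(size s) -> V,
    (forall i : 'I_(size s), component s`_i (ws i)) /\ v = \sum_i ws i.
Proof.
elim: s => [|z s IH] /=.
  move=> _ v; rewrite /primary_product big_nil (peval1 admT) => ->.
  by exists (fun _ => 0); split; [case | rewrite big_ord0].
move=> /andP [z_notin_s s_uniq] v; rewrite /primary_product big_cons => zsv.
have [v1 [v2 [-> [v1z v2s]]]] := coprimep_peval_split (coprimep_primary z_notin_s) zsv.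
have [ws [ws_comp ->]] := IH s_uniq v2 v2s.
exists (fun i : 'I_(size s).+1 => if unlift ord0 i is Some j then ws j else v1); split.
  by move=> i; case: unliftP => [j ->|->] //=; exact: ws_comp.
rewrite big_ord_recl /= unlift_none; congr (_ + _).
by apply: eq_bigr => j _; rewrite liftK.
Qed.

Lemma primary_sum_eq0 s : uniq s -> forall ws : 'I_(size s) -> V,
  (forall i : 'I_(size s), component s`_i (ws i)) -> \sum_i ws i = 0 ->
  forall i, ws i = 0.
Proof.
elim: s => [|z s IH] /=; first by move=> _ ws _ _ [].
move=> /andP [z_notin_s s_uniq] ws ws_comp; rewrite big_ord_recl => sum_ws.
set y := \sum_(j < size s) ws (lift ord0 j).
have ys : pT (primary_product s) y = 0.
  rewrite /y (pevalv_sum admT) big1 // => j _.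
  apply: (@peval_primary_product s`_j); first exact: mem_nth.
  by have := ws_comp (lift ord0 j); rewrite lift0.
have ws0 : ws ord0 = - y by apply/eqP; rewrite -addr_eq0 sum_ws.
have ws0_eq0 : ws ord0 = 0.
  apply: (coprimep_peval_eq0 (coprimep_primary z_notin_s)); first exact: (ws_comp ord0).
  by rewrite ws0 (pevalvN admT) ys oppr0.
have y0 : y = 0 by apply/eqP; rewrite -oppr_eq0 -ws0 ws0_eq0.
move=> i; case: (unliftP ord0 i) => [j ->|->] //.
apply: (IH s_uniq (fun j => ws (lift ord0 j))) => // k.
by have := ws_comp (lift ord0 k); rewrite lift0.
Qed.

Lemma primary_component_eq s : uniq s ->
  forall (ws : 'I_(size s) -> V) (i : 'I_(size s)) v,
  (forall l : 'I_(size s), component s`_l (ws l)) -> component s`_i v ->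
  \sum_l ws l = v -> ws i = v.
Proof.
move=> s_uniq ws i v ws_comp iv sum_ws.
pose ws' l := ws l - (if l == i then v else 0).
suff : ws' i = 0 by rewrite /ws' eqxx => /eqP; rewrite subr_eq0 => /eqP.
apply: (primary_sum_eq0 s_uniq) => [l|].
  rewrite (pevalvB admT) ws_comp sub0r.
  by case: eqP => [->|_]; rewrite ?iv ?(pevalv0 admT) oppr0.
by rewrite sumrB -big_mkcond big_pred1_eq sum_ws subrr.
Qed.
End PrimaryDecomposition.

Section CasimirComponents.
Variable W : sl2mod.
Local Notation C := (@casimir W).
Local Notation pa := (@polyact W).
Local Notation pC := (peval *:%R C).
Local Notation admC := (scale_admissible C).

Lemma linear_peval_casimir (S : {linear W -> W}) p v :
  (forall u, S (C u) = C (S u)) -> S (pC p v) = pC p (S v).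
Proof.
move=> SC; rewrite (peval_comm admC (S := S)) //.
- by move=> u w; rewrite linearD.
- by move=> r u; rewrite linearZ.
Qed.

Lemma casimir_kernel_submodule p : submodule (fun v : W => pC p v = 0).
Proof.
split=> [|u v uK vK|a v vK|v vK].
- by rewrite (pevalv0 admC).
- by rewrite (pevalvD admC) uK vK addr0.
- by rewrite (pevalvZ admC) vK scaler0.
- by split; rewrite -linear_peval_casimir ?vK ?linear0 // => u;
    rewrite ?casimir_E ?casimir_F ?casimir_H.
Qed.

Lemma polyact_peval_casimir q p v : pa q (pC p v) = pC p (pa q v).
Proof. by apply: linear_peval_casimir => u; rewrite casimir_polyact. Qed.

Hypothesis Wrat : rational W.
Variables (mult : CC_field -> nat) (s : seq CC_field).
Hypotheses (s_uniq : uniq s) (s_ann : forall v : W, pC (primary_product mult s) v = 0).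
Local Notation component i v := (pC (primary_factor mult s`_i) v = 0).

Lemma polyact_component p (ws : 'I_(size s) -> W) :
  (forall i : 'I_(size s), component i (ws i)) ->
  forall i : 'I_(size s), component i (pa p (ws i)).
Proof. by move=> ws_comp i; rewrite -polyact_peval_casimir ws_comp linear0. Qed.

Lemma primary_component_rational (i : 'I_(size s)) : rational_on (fun v => component i v).
Proof.
have [_ [pa_bij [n [b [_ b_span]]]]] := Wrat.
split; [exact: casimir_kernel_submodule | split].
  move=> p p_neq0; split=> [v _|w wi]; first exact: (proj1 (pa_bij p p_neq0)).
  have [v [_ pv]] := proj2 (pa_bij p p_neq0) w I.
  have [ws [ws_comp v_sum]] := primary_decomposition s_uniq (s_ann v).
  exists (ws i); split; first exact: ws_comp.
  apply: (primary_component_eq s_uniq (polyact_component p ws_comp)) => //.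
  by rewrite -pv v_sum linear_sum.
have [bs bs_dec] := fin_all_exists (fun j => primary_decomposition s_uniq (s_ann (b j))).
exists n, (fun j => bs j i); split=> [j|v vi]; first exact: (proj1 (bs_dec j) i).
have [p [q [p_neq0 pv]]] := b_span v I; exists p, q; split => //.
apply/esym/(@primary_component_eq _ C mult s s_uniq
  (fun l => \sum_j pa (q j) (bs j l))).
- move=> l; rewrite (pevalv_sum admC) big1 // => j _.
  by rewrite -polyact_peval_casimir (proj1 (bs_dec j) l) linear0.
- by rewrite -polyact_peval_casimir vi linear0.
- rewrite exchange_big pv /=; apply: eq_bigr => j _.
  by rewrite (proj2 (bs_dec j)) linear_sum.
Qed.
End CasimirComponents.

Lemma rational_decomposition (W : sl2mod) : rational W ->
  exists (r : nat) (mu : 'I_r -> CC_field) (Ws : 'I_r -> W -> Prop),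
    (forall i j, mu i = mu j -> i = j) /\
    (forall i, rational_on (Ws i) /\ gen_casimir_on (mu i) (Ws i)) /\
    (forall w : W, exists ws : 'I_r -> W,
       (forall i, Ws i (ws i)) /\ w = \sum_(i < r) ws i) /\
    (forall ws : 'I_r -> W, (forall i, Ws i (ws i)) ->
       \sum_(i < r) ws i = 0 -> forall i, ws i = 0).
Proof.
move=> Wrat; have admC := scale_admissible (@casimir W).
have [P [P_neq0 P_ann]] := casimir_annihilated Wrat.
have [rs P_split] := closed_field_poly_normal P.
pose mult z := count_mem z rs; pose s := undup rs.
have s_uniq : uniq s := undup_uniq rs.
have s_ann v : peval *:%R (@casimir W) (primary_product mult s) v = 0.
  have -> : primary_product mult s = \prod_(z <- rs) ('X - z%:P).
    rewrite /primary_product /primary_factor -(big_undup_iterop_count _ rs).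
    by apply: eq_bigr => z _; rewrite Monoid.iteropE iter_mulr_1.
  move: (P_ann v); rewrite {1}P_split -mul_polyC (peval_CM admC) => /eqP.
  by rewrite scaler_eq0 lead_coef_eq0 (negbTE P_neq0) => /eqP.
exists (size s), (fun i => s`_i),
  (fun i v => peval *:%R (@casimir W) (primary_factor mult s`_i) v = 0).
split; first by move=> i j /eqP; rewrite nth_uniq // => /eqP /val_inj.
split.
  move=> i; split; first exact: primary_component_rational.
  exists (mult s`_i); split; last by move=> v vi; rewrite -peval_XsubC_exp.
  by rewrite /mult -has_count has_pred1 -mem_undup mem_nth.
split=> [w|]; first exact: (@primary_decomposition _ (@casimir W) mult s s_uniq w).
exact: (@primary_sum_eq0 _ (@casimir W) mult s s_uniq).
Qed.

Lemma sl2hom_casimir (A B : sl2mod) (phi : {linear A -> B}) : sl2hom phi ->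
  forall v, phi (casimir v) = casimir (phi v).
Proof.
have phi_L0 v : sl2hom phi -> phi (L0 v) = L0 (phi v).
  by move=> phi_hom; rewrite /L0 linearZ /=; case: (phi_hom v) => _ _ ->.
move=> phi_hom v; rewrite /casimir /Lm1 /L1 linearB /= !phi_L0 // linearB /= phi_L0 //.
case: (phi_hom (- rhoE A v)) => _ -> _.
by rewrite linearN /=; case: (phi_hom v) => -> _ _.
Qed.

Lemma gen_casimir_hom_orthogonal (mu nu : CC_field) (A B : sl2mod) : mu <> nu ->
  in_RCgen mu A -> in_RCgen nu B ->
  forall phi : {linear A -> B}, sl2hom phi -> forall a : A, phi a = 0.
Proof.
move=> mu_neq_nu [_ [n [_ An]]] [_ [m [_ Bm]]] phi phi_hom a.
have phi_iter k v : phi (iter k (fun w => casimir w - mu *: w) v) =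
                    iter k (fun w => casimir w - mu *: w) (phi v).
  by elim: k => //= k <-; rewrite linearB linearZ /= (sl2hom_casimir phi_hom).
apply: (@coprimep_peval_eq0 _ (@casimir B) (('X - mu%:P) ^+ n) (('X - nu%:P) ^+ m)).
- rewrite coprimep_expl // coprimep_expr // coprimep_XsubC root_XsubC.
  by apply/eqP => nu_mu; apply: mu_neq_nu.
- by rewrite peval_XsubC_exp -phi_iter An // linear0.
- by rewrite peval_XsubC_exp Bm.
Qed.

Theorem theorem6p8 :
  (* every rational module is a finite direct sum of generalized Casimir
     rational submodules of pairwise distinct levels *)
  (forall W : sl2mod, rational W ->
     exists (r : nat) (mu : 'I_r -> CC_field) (Ws : 'I_r -> W -> Prop),
       (forall i j, mu i = mu j -> i = j) /\
       (forall i, rational_on (Ws i) /\ gen_casimir_on (mu i) (Ws i)) /\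
       (forall w : W, exists ws : 'I_r -> W,
          (forall i, Ws i (ws i)) /\ w = \sum_(i < r) ws i) /\
       (forall ws : 'I_r -> W, (forall i, Ws i (ws i)) ->
          \sum_(i < r) ws i = 0 -> forall i, ws i = 0)) /\
  (* Hom-orthogonality *)
  (forall (mu nu : CC_field) (A B : sl2mod), mu <> nu ->
     in_RCgen mu A -> in_RCgen nu B ->
     forall phi : {linear A -> B}, sl2hom phi -> forall a : A, phi a = 0) /\
  (* compatibility: RC_mu is contained in RC^bullet_mu *)
  (forall (mu : CC_field) (M : sl2mod), in_RC mu M -> in_RCgen mu M).
Proof.
split; first exact: rational_decomposition.
split; first exact: gen_casimir_hom_orthogonal.
move=> mu M [Mrat MC]; split=> //; exists 1%N; split=> // v _ /=.
by rewrite MC // subrr.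
Qed.
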